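(* Let $\lambda_1\ge\lambda_2\ge1$ with either $\lambda_1-\lambda_2=1$ or $\lambda_1-\lambda_2\ge 3$, and let $n=\lambda_1+\lambda_2$. Let $(\mu_1,\mu_2)$ be a partition of $n$ with $\mu_1\ge\mu_2\ge1$. Then there exist commuting nilpotent $n\times n$ matrices $B,A$ with $\mathrm{sh}(B)=(\lambda_1,\lambda_2)$ and $\mathrm{sh}(A)=(\mu_1,\mu_2)$ if and only if $(\mu_1,\mu_2)=(\lambda_1,\lambda_2)$.
   Context: $\mathbb{F}$ is an algebraically closed field of characteristic $0$ and matrices are over $\mathbb{F}$. For a nilpotent matrix $A$, $\mathrm{sh}(A)$ is the partition of $n$ given by the sizes of the Jordan blocks of its Jordan canonical form. *)

From HB Require Import structures.
From mathcomp Require Import all_boot all_order all_algebra.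
Set Implicit Arguments. Unset Strict Implicit. Unset Printing Implicit Defensive.
Import GRing.Theory.
Local Open Scope ring_scope.

Definition nil_jordan (F : fieldType) (k : nat) : 'M[F]_k :=
  \matrix_(i < k, j < k) (i.+1 == j)%:R.

Definition mx_nilpotent (F : fieldType) (n : nat) (A : 'M[F]_n) : Prop :=
  exists k : nat, iter k (mulmx A) 1%:M = 0.

Definition shape2 (F : fieldType) (n : nat) (A : 'M[F]_n) (a b : nat) : Prop :=
  exists (e : (a + b)%N = n) (P : 'M[F]_n),
    P \in unitmx /\
    P *m A *m invmx P = castmx (e, e) (block_mx (nil_jordan F a) 0 0 (nil_jordan F b)).

From HB Require Import structures.
From mathcomp Require Import all_boot all_order all_algebra.
From mathcomp Require Import zify.
Import GRing.Theory.
Local Open Scope ring_scope.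

(* The heart of the proof is a rank bound (commutant_rank_bound): let
   J = diag(J_a, J_b) with a >= b + 3 and b >= 1, and let M be nilpotent,
   commute with J and satisfy M^(a-1) = 0; then rank M <= a + b - 3.  Each
   block of M intertwines two Jordan blocks, hence is an upper triangular
   Toeplitz matrix.  Nilpotency forces both block diagonals to vanish, and
   M^(a-1) = 0 forces the superdiagonal of the upper-left block to vanish (the
   k-th coordinate of e_0 M^k is its k-th power).  Then rows a-1, a-2, a-3 and
   a+b-1 of M are all supported on column a-1, which costs three in rank.
   A matrix of shape (m1, m2) with m1, m2 > 0 has rank >= n - 2 and vanishes at
   the power m1.  So if B has shape (a, b) with a - b >= 3 and A of shape
   (m1, m2) commutes with B, then A^(a-1) <> 0 gives m1 >= a, and m1 > a would
   give m1 - m2 >= 3 and B^(m1-1) = 0, hence the symmetric contradiction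
   (commuting_largest_block).  The theorem follows by a parity argument when
   l1 - l2 = 1; the converse is witnessed by B = A = diag(J_l1, J_l2). *)

Set Implicit Arguments. Unset Strict Implicit. Unset Printing Implicit Defensive.

Section Entries.
Variable F : fieldType.

(* Entries of a matrix indexed by natural numbers, zero outside the matrix.
   Totality lets index arithmetic (i.+1, j - a, ...) be carried out freely. *)
Definition ent p q (X : 'M[F]_(p, q)) (i j : nat) : F :=
  oapp (fun i' : 'I_p => oapp (fun j' : 'I_q => X i' j') 0 (insub j)) 0 (insub i).

Lemma ent_ord p q (X : 'M[F]_(p, q)) (i : 'I_p) (j : 'I_q) : ent X i j = X i j.
Proof. by rewrite /ent !valK. Qed.

Lemma ent_in p q (X : 'M[F]_(p, q)) i j (hi : (i < p)%N) (hj : (j < q)%N) :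
  ent X i j = X (Ordinal hi) (Ordinal hj).
Proof. by rewrite -ent_ord. Qed.

Lemma ent_out p q (X : 'M[F]_(p, q)) i j : ~~ ((i < p) && (j < q))%N -> ent X i j = 0.
Proof.
move=> h; rewrite /ent; case: insubP => [i' hi _|_] /=; case: insubP => [j' hj _|_] //=.
  by rewrite hi hj in h.
all: by case: insub.
Qed.

Lemma ent_out_row p q (X : 'M[F]_(p, q)) i j : (p <= i)%N -> ent X i j = 0.
Proof. by move=> h; rewrite ent_out // negb_and -leqNgt h. Qed.

Lemma ent_out_col p q (X : 'M[F]_(p, q)) i j : (q <= j)%N -> ent X i j = 0.
Proof. by move=> h; rewrite ent_out // negb_and -!leqNgt h orbT. Qed.

Lemma ent_inj p q (X Y : 'M[F]_(p, q)) : (forall i j, ent X i j = ent Y i j) -> X = Y.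
Proof. by move=> h; apply/matrixP => i j; rewrite -!ent_ord. Qed.

Lemma row_inj n (u w : 'rV[F]_n) : (forall j, ent u 0 j = ent w 0 j) -> u = w.
Proof. by move=> h; apply: ent_inj => -[|i] j; [exact: h | rewrite !ent_out_row]. Qed.

Lemma ent0 p q i j : ent (0 : 'M[F]_(p, q)) i j = 0.
Proof.
case: (boolP ((i < p) && (j < q))%N) => [/andP[hi hj]|h]; last by rewrite ent_out.
by rewrite (ent_in _ hi hj) mxE.
Qed.

Lemma ent_add p q (X Y : 'M[F]_(p, q)) i j : ent (X + Y) i j = ent X i j + ent Y i j.
Proof.
case: (boolP ((i < p) && (j < q))%N) => [/andP[hi hj]|h]; last by rewrite !ent_out ?addr0.
by rewrite !(ent_in _ hi hj) mxE.
Qed.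

Lemma ent_scale p q a (X : 'M[F]_(p, q)) i j : ent (a *: X) i j = a * ent X i j.
Proof.
case: (boolP ((i < p) && (j < q))%N) => [/andP[hi hj]|h]; last by rewrite !ent_out ?mulr0.
by rewrite !(ent_in _ hi hj) mxE.
Qed.

Lemma ent_tr m n (X : 'M[F]_(m, n)) i j : ent X^T i j = ent X j i.
Proof.
case: (boolP ((i < n) && (j < m))%N) => [/andP[hi hj]|h].
  by rewrite (ent_in _ hi hj) (ent_in _ hj hi) mxE.
by rewrite !ent_out // andbC.
Qed.

Lemma ent_mul p q r (X : 'M[F]_(p, q)) (Y : 'M[F]_(q, r)) i j :
  ent (X *m Y) i j = \sum_(k < q) ent X i k * ent Y k j.
Proof.
case: (boolP ((i < p) && (j < r))%N) => [/andP[hi hj]|h].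
  rewrite ent_in mxE; apply: eq_bigr => k _.
  by rewrite -[i]/(nat_of_ord (Ordinal hi)) -[j]/(nat_of_ord (Ordinal hj)) !ent_ord.
rewrite ent_out // big1 // => k _; move: h; rewrite negb_and => /orP[h|h].
  by rewrite (@ent_out _ _ X) ?mul0r // negb_and h.
by rewrite (@ent_out _ _ Y) ?mulr0 // negb_and h orbT.
Qed.

Lemma ent_block m1 m2 n1 n2 (A : 'M[F]_(m1, n1)) (B : 'M[F]_(m1, n2))
    (C : 'M[F]_(m2, n1)) (D : 'M[F]_(m2, n2)) i j :
  ent (block_mx A B C D) i j =
  if (i < m1)%N then (if (j < n1)%N then ent A i j else ent B i (j - n1))
  else (if (j < n1)%N then ent C (i - m1) j else ent D (i - m1) (j - n1)).
Proof.
case: (boolP ((i < m1 + m2) && (j < n1 + n2))%N) => [/andP[hi hj]|h]; last first.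
  move: h; rewrite negb_and -!leqNgt => /orP[h|h].
    by rewrite ent_out_row //; case: ltnP => ?; case: ltnP => ?;
      rewrite ent_out_row //; lia.
  by rewrite ent_out_col //; case: ltnP => ?; case: ltnP => ?;
    rewrite ent_out_col //; lia.
rewrite ent_in; case: (splitP (Ordinal hi)) => i1 /= Ei; subst i;
  case: (splitP (Ordinal hj)) => j1 /= Ej; subst j.
- have -> : Ordinal hi = lshift m2 i1 by apply: val_inj.
  have -> : Ordinal hj = lshift n2 j1 by apply: val_inj.
  by rewrite block_mxEul ent_ord.
- have -> : Ordinal hi = lshift m2 i1 by apply: val_inj.
  have -> : Ordinal hj = rshift n1 j1 by apply: val_inj.
  by rewrite block_mxEur addKn ent_ord.
- have -> : Ordinal hi = rshift m1 i1 by apply: val_inj.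
  have -> : Ordinal hj = lshift n2 j1 by apply: val_inj.
  by rewrite block_mxEdl addKn ent_ord.
- have -> : Ordinal hi = rshift m1 i1 by apply: val_inj.
  have -> : Ordinal hj = rshift n1 j1 by apply: val_inj.
  by rewrite block_mxEdr !addKn ent_ord.
Qed.

Lemma sum_delta p (c : nat) (f : nat -> F) :
  \sum_(k < p) (c == k)%:R * f k = (c < p)%N%:R * f c.
Proof.
elim: p => [|p IH]; first by rewrite big_ord0 mul0r.
rewrite big_ord_recr /= IH ltnS; have [E|ne] := eqVneq c p.
  by rewrite E ltnn leqnn /= mul0r add0r mul1r.
by rewrite /= mul0r addr0 [(c <= p)%N]leq_eqVlt (negbTE ne).
Qed.

Lemma sum_single n (f : nat -> F) (t : nat) :
  (forall i, (i < n)%N -> i != t -> f i = 0) -> \sum_(i < n) f i = (t < n)%N%:R * f t.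
Proof.
move=> h; rewrite -sum_delta; apply: eq_bigr => i _.
case: (eqVneq t i) => [_|ne]; first by rewrite mul1r.
by rewrite mul0r h // eq_sym.
Qed.

(* The standard basis row vector e_t (the zero vector when t >= n). *)
Definition unit_row n (t : nat) : 'rV[F]_n := \row_(j < n) (t == j)%:R.

Lemma ent_unit_row n (t : nat) j : ent (unit_row n t) 0 j = ((t == j) && (j < n))%N%:R.
Proof.
case: (ltnP j n) => hj; last by rewrite ent_out_col // andbF.
by rewrite (ent_in _ (ltn0Sn 0) hj) mxE andbT.
Qed.

Lemma ent_unit_row_mul n p (t : nat) (X : 'M[F]_(n, p)) j :
  ent (unit_row n t *m X) 0 j = (t < n)%N%:R * ent X t j.
Proof.
rewrite ent_mul -(sum_delta _ _ (fun k => ent X k j)); apply: eq_bigr => k _.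
by rewrite ent_unit_row ltn_ord andbT.
Qed.

End Entries.
Arguments unit_row {F} n t.

Section JordanBlock.
Variable F : fieldType.
Local Notation J := (nil_jordan F).

Lemma ent_jordan p i j : ent (J p) i j = ((i.+1 == j) && (j < p))%N%:R.
Proof.
case: (boolP ((i < p) && (j < p))%N) => [/andP[hi hj]|h].
  by rewrite ent_in mxE /= hj andbT.
rewrite ent_out //; case: eqP => //= E; move: h; rewrite -E.
by case: (ltnP i.+1 p) => // hp; rewrite (ltnW hp).
Qed.

Lemma ent_jordan_mul p q (X : 'M[F]_(p, q)) i j : ent (J p *m X) i j = ent X i.+1 j.
Proof.
rewrite ent_mul (eq_bigr (fun k : 'I_p => (i.+1 == k)%:R * ent X k j)); last first.
  by move=> k _; rewrite ent_jordan ltn_ord andbT.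
rewrite (sum_delta _ _ (fun k => ent X k j)); case: ltnP => h; first by rewrite mul1r.
by rewrite mul0r ent_out_row.
Qed.

Lemma ent_mul_jordan p q (X : 'M[F]_(p, q)) i j :
  ent (X *m J q) i j = if j is j'.+1 then (j < q)%N%:R * ent X i j' else 0.
Proof.
rewrite ent_mul; case: j => [|j].
  by rewrite big1 // => k _; rewrite ent_jordan /= mulr0.
rewrite (eq_bigr (fun k : 'I_q => (j.+1 < q)%N%:R * ((j == k)%:R * ent X i k))); last first.
  move=> k _; rewrite ent_jordan eqSS eq_sym.
  by case: (j == k); case: (j.+1 < q)%N; rewrite /= ?mulr0 ?mulr1 ?mul1r ?mul0r.
rewrite -mulr_sumr (sum_delta _ _ (fun k => ent X i k)); case: (ltnP j.+1 q) => h.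
  by rewrite (ltnW h) mul1r.
by rewrite /= ?mul0r.
Qed.

Section Intertwiner.
(* Such an X is an
   upper triangular Toeplitz matrix, aligned with the top-right corner when
   p <= q and with the bottom-right corner when q <= p. *)
Variables (p q : nat) (X : 'M[F]_(p, q)).
Hypothesis intertwines : J p *m X = X *m J q.

Lemma intertwiner_shift i j : (j < q)%N ->
  ent X i.+1 j = if j is j'.+1 then ent X i j' else 0.
Proof.
move=> hj; rewrite -ent_jordan_mul intertwines ent_mul_jordan.
by case: j hj => // j hj; rewrite hj mul1r.
Qed.

Lemma intertwiner_diagS i j : (j.+1 < q)%N -> ent X i.+1 j.+1 = ent X i j.
Proof. exact: intertwiner_shift. Qed.

Lemma intertwiner_below i j : (j < i)%N -> ent X i j = 0.
Proof.
elim: j i => [|j IH] [|i] //= h.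
  case: (ltnP 0 q) => hq; [exact: intertwiner_shift | exact: ent_out_col].
case: (ltnP j.+1 q) => hq; last exact: ent_out_col.
by rewrite intertwiner_diagS // IH.
Qed.

Lemma intertwiner_below_corner i j : (j + p < i + q)%N -> ent X i j = 0.
Proof.
move: {2}(p - i)%N (leqnn (p - i)%N) => k; elim: k i j => [|k IH] i j hk h.
  by rewrite ent_out_row //; lia.
case: (ltnP i p) => hi; last exact: ent_out_row.
have hj : (j.+1 < q)%N by lia.
by rewrite -(intertwiner_diagS i hj); apply: IH; lia.
Qed.

Lemma intertwiner_diag t : (t < q)%N -> ent X t t = ent X 0 0.
Proof. by elim: t => // t IH h; rewrite intertwiner_diagS // IH // ltnW. Qed.

Lemma intertwiner_superdiag t : (t.+1 < q)%N -> ent X t t.+1 = ent X 0 1.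
Proof. by elim: t => // t IH h; rewrite intertwiner_diagS // IH // ltnW. Qed.

End Intertwiner.

Lemma ent_jordan_exp p k i j : ent (J p ^+ k) i j = ((i + k == j) && (j < p))%N%:R.
Proof.
elim: k j => [|k IH] j.
  case: (boolP ((i < p) && (j < p))%N) => [/andP[hi hj]|h].
    by rewrite expr0 ent_in mxE addn0 hj andbT.
  rewrite ent_out // addn0; case: eqP => //= E; move: h; rewrite E.
  by case: (j < p)%N.
rewrite exprSr -mulmxE ent_mul.
rewrite (eq_bigr (fun l : 'I_p => (i + k == l)%:R * ((l.+1 == j) && (j < p))%N%:R));
  last first.
  by move=> l _; rewrite IH ent_jordan ltn_ord andbT.
rewrite (sum_delta _ _ (fun l => ((l.+1 == j) && (j < p))%N%:R)) addnS.
case: (ltnP (i + k) p) => h; first by rewrite mul1r.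
rewrite mul0r; case: eqP => //= E; subst j.
by rewrite ltnNge (leq_trans h (leqnSn _)).
Qed.

Lemma jordan_exp_ge p k : (p <= k)%N -> J p ^+ k = 0.
Proof.
move=> h; apply: ent_inj => i j; rewrite ent_jordan_exp ent0.
by case: eqP => //= <-; rewrite ltnNge (leq_trans h (leq_addl _ _)).
Qed.

(* J_p has rank p - 1: J_p J_p^T is the projection onto the first p - 1 coordinates. *)
Lemma jordan_rank p : (p.-1 <= \rank (J p))%N.
Proof.
have e : J p *m (J p)^T = pid_mx p.-1.
  apply: ent_inj => i j; rewrite ent_mul.
  rewrite (eq_bigr (fun l : 'I_p => (i.+1 == l)%:R * ((j.+1 == l) && (l < p))%N%:R));
    last first.
    by move=> l _; rewrite ent_tr !ent_jordan !ltn_ord andbT.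
  rewrite (sum_delta _ _ (fun l => ((j.+1 == l) && (l < p))%N%:R)).
  case: (boolP ((i < p) && (j < p))%N) => [/andP[hi hj]|h].
    rewrite (ent_in _ hi hj) mxE /= eqSS eq_sym.
    case: (ltnP i.+1 p) => h1.
      by rewrite mul1r (_ : (i < p.-1)%N = true) //; lia.
    by rewrite (_ : (i < p.-1)%N = false) ?andbF /= ?mulr0n ?mul0r //; lia.
  rewrite ent_out //; case: (ltnP i.+1 p) => h1; last by rewrite mul0r.
  rewrite mul1r; case: eqP => //= E; exfalso; move/negP: h; apply; apply/andP; split; lia.
by have := mxrankM_maxl (J p) (J p)^T; rewrite e rank_pid_mx ?leq_pred.
Qed.

End JordanBlock.

Section Powers.
Variable F : fieldType.

Lemma iter_mulmx n (A : 'M[F]_n) k : iter k (mulmx A) 1%:M = A ^+ k.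
Proof. by elim: k => [|k IH] //=; rewrite IH exprS. Qed.

Lemma conj_exp n (A P : 'M[F]_n) k : P \in unitmx ->
  (P *m A *m invmx P) ^+ k = P *m A ^+ k *m invmx P.
Proof.
move=> hP; elim: k => [|k IH]; first by rewrite !expr0 mulmx1 mulmxV.
by rewrite !exprS -!mulmxE IH !mulmxA mulmxKV.
Qed.

Lemma block_diag_exp m n (A : 'M[F]_m) (B : 'M[F]_n) k :
  (block_mx A 0 0 B) ^+ k = block_mx (A ^+ k) 0 0 (B ^+ k).
Proof.
elim: k => [|k IH]; first by rewrite !expr0 -scalar_mx_block.
by rewrite !exprS -!mulmxE IH mulmx_block !mulmx0 !mul0mx !addr0 !add0r.
Qed.

Lemma rank_conj n (A P : 'M[F]_n) : P \in unitmx -> \rank (P *m A *m invmx P) = \rank A.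
Proof.
move=> hP; rewrite mxrankMfree ?row_free_unit ?unitmx_inv //.
by rewrite (eqmxMfull _ (_ : row_full P)) // row_full_unit.
Qed.

End Powers.

Section NilpotentEigen.
Variable F : fieldType.

(* If w M = s w + r v with v M = 0 and M nilpotent, then s = 0, provided some
   coordinate t separates w from v.  With v = 0 this says that the only
   eigenvalue of a nilpotent matrix is 0. *)
Lemma nilpotent_eigen n (M : 'M[F]_n) (v w : 'rV[F]_n) s r t :
  (exists K, M ^+ K = 0) -> v *m M = 0 -> w *m M = s *: w + r *: v ->
  ent w 0 t != 0 -> ent v 0 t = 0 -> s = 0.
Proof.
move=> [K hK] hv hw hwt hvt.
have orbit k : exists c, w *m M ^+ k = s ^+ k *: w + c *: v.
  elim: k => [|k [c IH]]; first by exists 0; rewrite expr0 mulmx1 scale0r addr0 scale1r.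
  exists (s ^+ k * r); rewrite exprSr -mulmxE mulmxA IH mulmxDl -!scalemxAl hv hw.
  by rewrite scaler0 addr0 scalerDr !scalerA exprSr.
have [c] := orbit K; rewrite hK mulmx0 => /(congr1 (fun X => ent X 0 t)).
rewrite ent0 ent_add !ent_scale hvt mulr0 addr0 => /esym/eqP.
by rewrite mulf_eq0 (negbTE hwt) orbF expf_eq0 => /andP[_ /eqP].
Qed.

End NilpotentEigen.

Section CommutantOfJordanPair.
Variable F : fieldType.
Variables (a b : nat).
Hypotheses (gap_ab : (b + 3 <= a)%N) (b_gt0 : (0 < b)%N).
Variable M : 'M[F]_(a + b).
Hypothesis commJ :
  block_mx (nil_jordan F a) 0 0 (nil_jordan F b) *m M =
  M *m block_mx (nil_jordan F a) 0 0 (nil_jordan F b).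
Hypothesis nilM : exists K, M ^+ K = 0.

Lemma blocks_intertwine :
  [/\ nil_jordan F a *m ulsubmx M = ulsubmx M *m nil_jordan F a,
      nil_jordan F a *m ursubmx M = ursubmx M *m nil_jordan F b,
      nil_jordan F b *m dlsubmx M = dlsubmx M *m nil_jordan F a &
      nil_jordan F b *m drsubmx M = drsubmx M *m nil_jordan F b].
Proof.
have e := commJ; rewrite -(submxK M) !mulmx_block !mulmx0 !mul0mx !addr0 !add0r in e.
by case/eq_block_mx: e.
Qed.

Lemma ent_M i j : ent M i j =
  if (i < a)%N then (if (j < a)%N then ent (ulsubmx M) i j else ent (ursubmx M) i (j - a))
  else (if (j < a)%N then ent (dlsubmx M) (i - a) j else ent (drsubmx M) (i - a) (j - a)).
Proof. by rewrite -{1}(submxK M) ent_block. Qed.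

Lemma M11_below i j : (j < i)%N -> (i < a)%N -> ent M i j = 0.
Proof.
move=> h hi; have [e _ _ _] := blocks_intertwine.
by rewrite ent_M hi (ltn_trans h hi) (intertwiner_below e).
Qed.

Lemma M12_zero i j : (i < a)%N -> (a <= j)%N -> (j < a + i)%N -> ent M i j = 0.
Proof.
move=> hi hj h; have [_ e _ _] := blocks_intertwine.
by rewrite ent_M hi ltnNge hj /= (intertwiner_below e) //; lia.
Qed.

Lemma M21_zero i j : (a <= i)%N -> (j + b < i)%N -> ent M i j = 0.
Proof.
move=> hi h; have [_ _ e _] := blocks_intertwine.
case: (ltnP i (a + b)) => hib; last exact: ent_out_row.
have hj : (j < a)%N by lia.
by rewrite ent_M ltnNge hi hj /= (intertwiner_below_corner e) //; lia.
Qed.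

Lemma M22_below i j : (a <= i)%N -> (a <= j)%N -> (j < i)%N -> ent M i j = 0.
Proof.
move=> hi hj h; have [_ _ _ e] := blocks_intertwine.
by rewrite ent_M ltnNge hi ltnNge hj /= (intertwiner_below e) //; lia.
Qed.

Definition diag1 := ent M 0 0.
Definition superdiag1 := ent M 0 1.
Definition diag2 := ent M a a.

Lemma M11_diag t : (t < a)%N -> ent M t t = diag1.
Proof.
move=> h; have [e _ _ _] := blocks_intertwine.
by rewrite /diag1 !ent_M h (leq_ltn_trans (leq0n t) h) (intertwiner_diag e).
Qed.

Lemma M11_superdiag t : (t.+1 < a)%N -> ent M t t.+1 = superdiag1.
Proof.
move=> h; have [e _ _ _] := blocks_intertwine; have ha : (1 < a)%N by lia.
by rewrite /superdiag1 !ent_M (ltnW h) h (leq_ltn_trans (leq0n _) ha) ha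
  (intertwiner_superdiag e).
Qed.

Lemma M22_diag t : (a <= t)%N -> (t < a + b)%N -> ent M t t = diag2.
Proof.
move=> h1 h2; have [_ _ _ e] := blocks_intertwine.
by rewrite /diag2 !ent_M ltnn ltnNge h1 /= subnn (intertwiner_diag e) //; lia.
Qed.

(* Row a-1 of M is diag1 e_(a-1), so diag1 = 0 by nilpotency. *)
Lemma row_last1 :
  unit_row (a + b) a.-1 *m M = diag1 *: unit_row (a + b) a.-1.
Proof.
have ha : (a.-1 < a + b)%N by lia.
apply: row_inj => j; rewrite ent_unit_row_mul ha mul1r ent_scale ent_unit_row.
case: (ltngtP j a.-1) => hj /=.
- by rewrite M11_below ?mulr0 //; lia.
- case: (ltnP j (a + b)) => hjb; last by rewrite ent_out_col ?mulr0.
  by rewrite M12_zero ?mulr0 //; lia.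
- by rewrite hj M11_diag ?ha ?mulr1 //; lia.
Qed.

Lemma diag1_eq0 : diag1 = 0.
Proof.
apply: (@nilpotent_eigen _ _ M 0 (unit_row (a + b) a.-1) diag1 0 a.-1) => //.
- by rewrite mul0mx.
- by rewrite row_last1 scaler0 addr0.
- by rewrite ent_unit_row eqxx (_ : (a.-1 < a + b)%N) ?oner_neq0 //; lia.
- by rewrite ent0.
Qed.

(* The last row of M is diag2 e_(a+b-1) + c e_(a-1), so diag2 = 0 as well. *)
Lemma row_last2 :
  unit_row (a + b) (a + b).-1 *m M =
  diag2 *: unit_row (a + b) (a + b).-1 + ent M (a + b).-1 a.-1 *: unit_row (a + b) a.-1.
Proof.
have hb : ((a + b).-1 < a + b)%N by lia.
apply: row_inj => j; rewrite ent_unit_row_mul hb mul1r ent_add !ent_scale !ent_unit_row.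
case: (ltnP j (a + b)) => hjb; last by rewrite ent_out_col ?andbF ?mulr0 ?addr0.
rewrite !andbT; case: (ltngtP j a.-1) => hj.
- rewrite M21_zero; try lia.
  by rewrite (_ : ((a + b).-1 == j) = false) ?mulr0 ?addr0 //; lia.
- case: (ltngtP j (a + b).-1) => hj2; try lia.
    by rewrite M22_below ?mulr0 ?addr0 //; lia.
  by rewrite hj2 mulr1 mulr0 addr0 M22_diag //; lia.
- by rewrite -hj mulr1 (_ : ((a + b).-1 == j) = false) ?mulr0 ?add0r //; lia.
Qed.

Lemma diag2_eq0 : diag2 = 0.
Proof.
apply: (@nilpotent_eigen _ _ M (unit_row (a + b) a.-1) (unit_row (a + b) (a + b).-1)
  diag2 (ent M (a + b).-1 a.-1) (a + b).-1) => //.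
- by rewrite row_last1 diag1_eq0 scale0r.
- exact: row_last2.
- by rewrite ent_unit_row eqxx (_ : ((a + b).-1 < a + b)%N) ?oner_neq0 //; lia.
- by rewrite ent_unit_row; case: eqP => //= E; lia.
Qed.


Lemma ent_row_mul (v : 'rV[F]_(a + b)) j : ent (v *m M) 0 j =
  \sum_(i < a) ent v 0 i * ent M i j + \sum_(i < b) ent v 0 (a + i)%N * ent M (a + i)%N j.
Proof. by rewrite ent_mul big_split_ord. Qed.

(* The shape of e_0 M^k: it vanishes on the first k coordinates of each block
   (one fewer in the second block) and its k-th coordinate is c = superdiag1^k. *)
Definition leading_pattern k c (v : 'rV[F]_(a + b)) : Prop :=
  [/\ (forall j, (j < k)%N -> ent v 0 j = 0),
      (forall j, (j.+1 < k)%N -> ent v 0 (a + j)%N = 0) & ent v 0 k = c].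

Section PatternStep.
Variables (k : nat) (c : F) (v : 'rV[F]_(a + b)).
Hypotheses (k_lt : (k.+1 < a)%N) (hv : leading_pattern k c v).

Lemma pattern_step_block1 j : (j < k.+1)%N -> ent (v *m M) 0 j = 0.
Proof.
move=> hj; have [h1 h2 _] := hv.
rewrite ent_row_mul !big1 ?addr0 // => i _; have hi := ltn_ord i.
- case: (ltnP i.+1 k) => hik; first by rewrite h2 // mul0r.
  by rewrite M21_zero ?mulr0 //; lia.
- case: (ltnP i k) => hik; first by rewrite h1 // mul0r.
  case: (ltngtP j i) => hji; [by rewrite M11_below ?mulr0 | lia |].
  by rewrite hji M11_diag ?diag1_eq0 ?mulr0.
Qed.

Lemma pattern_step_block2 j : (j.+1 < k.+1)%N -> ent (v *m M) 0 (a + j)%N = 0.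
Proof.
move=> hj; have [h1 h2 _] := hv.
rewrite ent_row_mul !big1 ?addr0 // => i _; have hi := ltn_ord i.
- case: (ltnP i.+1 k) => hik; first by rewrite h2 // mul0r.
  case: (ltngtP j i) => hji; [by rewrite M22_below ?mulr0 //; lia | lia |].
  by rewrite hji M22_diag ?diag2_eq0 ?mulr0 //; lia.
- case: (ltnP i k) => hik; first by rewrite h1 // mul0r.
  by rewrite M12_zero ?mulr0 //; lia.
Qed.

Lemma pattern_step_lead : ent (v *m M) 0 k.+1 = c * superdiag1.
Proof.
have [h1 h2 h3] := hv; rewrite ent_row_mul [X in _ + X]big1 ?addr0; last first.
  move=> i _; case: (ltnP i.+1 k) => hik; first by rewrite h2 // mul0r.
  by rewrite M21_zero ?mulr0 //; lia.
rewrite (@sum_single _ a (fun i => ent v 0 i * ent M i k.+1) k).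
  by rewrite (ltnW k_lt) mul1r h3 M11_superdiag.
move=> i hi ne; case: (ltngtP i k) => hik; first by rewrite h1 // mul0r.
  have [->|ne2] := eqVneq i k.+1; first by rewrite M11_diag ?diag1_eq0 ?mulr0.
  by rewrite M11_below ?mulr0 //; lia.
by move: ne; rewrite hik eqxx.
Qed.

End PatternStep.

Lemma leading_pattern_exp k : (k < a)%N ->
  leading_pattern k (superdiag1 ^+ k) (unit_row (a + b) 0 *m M ^+ k).
Proof.
elim: k => [|k IH] hk.
  by rewrite expr0 mulmx1; split => //; rewrite ent_unit_row /= (_ : (0 < a + b)%N) //; lia.
have hv := IH (ltnW hk).
rewrite [M ^+ _]exprSr -mulmxE mulmxA exprS mulrC; split.
- exact: pattern_step_block1 hk hv.
- exact: pattern_step_block2 hk hv.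
- exact: pattern_step_lead hk hv.
Qed.

Lemma superdiag1_eq0 : M ^+ a.-1 = 0 -> superdiag1 = 0.
Proof.
move=> h; have ha : (a.-1 < a)%N by lia.
have [_ _] := leading_pattern_exp ha; rewrite h mulmx0 ent0 => /esym/eqP.
by rewrite expf_eq0 => /andP[_ /eqP].
Qed.

Lemma zero_pattern i j : superdiag1 = 0 ->
  [|| [&& (i < a)%N, (j < a)%N & (j <= i)%N], [&& (i.+1 < a)%N & (j == i.+1)],
      [&& (i < a)%N, (a <= j)%N & (j < a + i)%N], [&& (a <= i)%N & (j + b < i)%N],
      [&& (a <= i)%N, (a <= j)%N & (j <= i)%N], (a + b <= i)%N | (a + b <= j)%N] ->
  ent M i j = 0.
Proof.
move=> h1 /or4P[/and3P[hi hj hji]|/andP[hi /eqP ->]|/and3P[]|/orP[/andP[]|/orP[]]].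
- case: (ltngtP j i) => hji'; [exact: M11_below | lia |].
  by rewrite hji' M11_diag ?diag1_eq0.
- by rewrite M11_superdiag.
- exact: M12_zero.
- exact: M21_zero.
- move=> /and3P[hi hj hji]; case: (ltngtP j i) => hji'; [exact: M22_below | lia |].
  case: (ltnP i (a + b)) => hib; last exact: ent_out_row.
  by rewrite hji' M22_diag ?diag2_eq0.
- by move=> /orP[h|h]; [exact: ent_out_row | exact: ent_out_col].
Qed.

(* Rows a-1, a-2, a-3 and a+b-1 of M vanish outside column a-1 (this is where
   a >= b + 3 is used), so they span at most a line. *)
Definition sparse_row (i : nat) : nat :=
  nth 0%N [:: a.-1; a.-2; (a - 3)%N; (a + b).-1] i.

Lemma sparse_row_lt (i : 'I_4) : (sparse_row i < a + b)%N.
Proof. by rewrite /sparse_row; case: i => [[|[|[|[|i]]]] hi] //=; lia. Qed.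

Definition sparse_row_ord (i : 'I_4) : 'I_(a + b) := Ordinal (sparse_row_lt i).

Lemma sparse_row_ord_eq i j : (sparse_row_ord i == sparse_row_ord j) = (i == j).
Proof.
rewrite -val_eqE /= /sparse_row.
case: i => [[|[|[|[|i]]]] hi] //; case: j => [[|[|[|[|j]]]] hj] //=;
  rewrite -?val_eqE /=; case: eqP => //; lia.
Qed.

Lemma sparse_row_zero (i : 'I_4) (j : nat) :
  superdiag1 = 0 -> j != a.-1 -> ent M (sparse_row i) j = 0.
Proof.
move=> h1 /eqP hj; apply: zero_pattern => //; rewrite /sparse_row.
by case: i => [[|[|[|[|i]]]] hi] //=; lia.
Qed.

Lemma rank_le_of_superdiag1 : superdiag1 = 0 -> (\rank M <= a + b - 3)%N.
Proof.
move=> h1; pose S := rowsub sparse_row_ord (1%:M : 'M[F]_(a + b)).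
have rank_S : (4 <= \rank S)%N.
  have SST : S *m S^T = 1%:M.
    by rewrite /S -rowsubE; apply/matrixP => i j; rewrite !mxE sparse_row_ord_eq eq_sym.
  by rewrite -{1}(mxrank1 F 4) -SST mxrankM_maxl.
have ha : (a.-1 < a + b)%N by lia.
pose l : 'I_(a + b) := Ordinal ha.
have SM : S *m M = rowsub sparse_row_ord M *m delta_mx l l.
  rewrite /S -rowsubE; apply/matrixP => i j; rewrite !mxE (bigD1 l) //= big1 => [|k hk].
    rewrite !mxE eqxx /= addr0; case: (eqVneq j l) => [->|hj] /=.
      by rewrite mulr1n mulr1.
    by rewrite mulr0n mulr0 -(ent_ord M) /= sparse_row_zero.
  by rewrite !mxE (negbTE hk) mulr0.
have rank_SM : (\rank (S *m M) <= 1)%N.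
  by rewrite SM (leq_trans (mxrankM_maxr _ _)) // mxrank_delta.
have := mxrank_mul_min S M; have := rank_leq_row M; lia.
Qed.

Lemma commutant_rank_bound : M ^+ a.-1 = 0 -> (\rank M <= a + b - 3)%N.
Proof. by move=> h; apply/rank_le_of_superdiag1/superdiag1_eq0. Qed.

End CommutantOfJordanPair.

Section Shapes.
Variable F : fieldType.

Lemma conj_mulmx n (P X Y : 'M[F]_n) : P \in unitmx ->
  (P *m X *m invmx P) *m (P *m Y *m invmx P) = P *m (X *m Y) *m invmx P.
Proof. by move=> hP; rewrite !mulmxA mulmxKV. Qed.

Lemma unconj n (X P : 'M[F]_n) : P \in unitmx -> X = invmx P *m (P *m X *m invmx P) *m P.
Proof. by move=> hP; rewrite !mulmxA mulVmx // mul1mx -mulmxA mulVmx // mulmx1. Qed.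

Lemma shape_exp_eq0 N (A : 'M[F]_N) m1 m2 k :
  shape2 A m1 m2 -> (m2 <= m1)%N -> (m1 <= k)%N -> A ^+ k = 0.
Proof.
case=> e [P [hP hPA]] h21 hk; subst N; rewrite castmx_id in hPA.
have := conj_exp A k hP.
rewrite hPA block_diag_exp !jordan_exp_ge ?(leq_trans h21) // block_mx0 => h.
by rewrite (unconj (A ^+ k) hP) -h mulmx0 mul0mx.
Qed.

Lemma shape_rank N (A : 'M[F]_N) m1 m2 :
  shape2 A m1 m2 -> (0 < m1)%N -> (0 < m2)%N -> (N - 2 <= \rank A)%N.
Proof.
case=> e [P [hP hPA]] h1 h2; subst N; rewrite castmx_id in hPA.
rewrite -(rank_conj A hP) hPA rank_diag_block_mx.
by have := jordan_rank F m1; have := jordan_rank F m2; lia.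
Qed.

Lemma commuting_rank_bound N (B A : 'M[F]_N) a b :
  shape2 B a b -> (b + 3 <= a)%N -> (0 < b)%N -> A *m B = B *m A ->
  (exists K, A ^+ K = 0) -> A ^+ a.-1 = 0 -> (\rank A <= N - 3)%N.
Proof.
case=> e [P [hP hPB]] hab hb hAB [K hK] hA; subst N; rewrite castmx_id in hPB.
rewrite -(rank_conj A hP); apply: commutant_rank_bound => //.
- by rewrite -hPB !conj_mulmx // hAB.
- by exists K; rewrite conj_exp // hK mulmx0 mul0mx.
- by rewrite conj_exp // hA mulmx0 mul0mx.
Qed.

Lemma commuting_largest_block N (B A : 'M[F]_N) a b m1 m2 :
  A *m B = B *m A -> shape2 B a b -> shape2 A m1 m2 -> (b + 3 <= a)%N -> (0 < b)%N ->
  (0 < m2)%N -> (m2 <= m1)%N -> (m1 + m2 = a + b)%N -> m1 = a.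
Proof.
move=> hAB sB sA hab hb hm2 hm21 hs.
have eN : (a + b)%N = N by case: sB.
have rank_A := shape_rank sA (leq_trans hm2 hm21) hm2.
have rank_B := shape_rank sB (_ : 0 < a)%N hb.
have nilA : exists K, A ^+ K = 0 by exists m1; apply: shape_exp_eq0 sA hm21 _.
have nilB : exists K, B ^+ K = 0 by exists a; apply: shape_exp_eq0 sB _ _; lia.
have a_le_m1 : (a <= m1)%N.
  rewrite leqNgt; apply/negP => lt_m1a.
  have := commuting_rank_bound sB hab hb hAB nilA (shape_exp_eq0 sA hm21 _); lia.
case: (ltngtP a m1) => // [lt_a_m1|]; last by lia.
have := commuting_rank_bound sA (_ : m2 + 3 <= m1)%N hm2 (esym hAB) nilB
  (shape_exp_eq0 sB _ _); lia.
Qed.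

End Shapes.

(* Algebraic closedness and characteristic 0 are not used: the argument works
   over any field. *)
Theorem lemma3p3 (F : closedFieldType) (charF0 : [pchar F] =i pred0)
    (l1 l2 m1 m2 : nat) :
  (l2 <= l1)%N -> (1 <= l2)%N -> ((l1 - l2)%N = 1%N \/ (3 <= l1 - l2)%N) ->
  (m2 <= m1)%N -> (1 <= m2)%N -> (m1 + m2)%N = (l1 + l2)%N ->
  (exists B A : 'M[F]_(l1 + l2),
      mx_nilpotent B /\ mx_nilpotent A /\ B *m A = A *m B /\
      shape2 B l1 l2 /\ shape2 A m1 m2)
  <-> (m1 = l1 /\ m2 = l2).
Proof.
move=> h21 hl2 gap hm21 hm2 hs; split.
  case=> B [A [_ [_ [hBA [sB sA]]]]].
  suff e1 : m1 = l1 by split => //; lia.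
  have [big_gap_m|small_gap] := leqP 3 (m1 - m2).
    by apply/esym/(commuting_largest_block hBA sA sB); lia.
  case: gap => [gap1|big_gap_l]; first lia.
  by apply: (commuting_largest_block (esym hBA) sB sA); lia.
case=> -> ->.
pose G := block_mx (nil_jordan F l1) 0 0 (nil_jordan F l2).
have nilG : mx_nilpotent G.
  by exists l1; rewrite iter_mulmx block_diag_exp !jordan_exp_ge // block_mx0.
have shapeG : shape2 G l1 l2.
  exists erefl, 1%:M; split; first exact: unitmx1.
  by rewrite castmx_id invmx1 mul1mx mulmx1.
by exists G, G.
Qed.
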